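(* Let $[\mathcal{S},\mathcal{T},\mathcal{R}]$ be a backdoor triple with $\mathcal{S},\mathcal{T},\mathcal{R}$ finite, and let $a$ be the maximum arity of the relations in $\mathcal{S}$. Then there is a branching map for the sidedoor triple $\llbracket\mathcal{S}\cup\mathcal{R},\mathcal{T}\cup\mathcal{R},r\rrbracket$ whenever $r\ge\max(2,a)$.
   Context: A partition scheme is a set $\mathcal{R}$ of binary relations over a domain $D$ that are pairwise disjoint, whose union is $D^2$, which contains equality on $D$, and which is closed under converses. A backdoor triple $[\mathcal{S},\mathcal{T},\mathcal{R}]$ consists of a partition scheme $\mathcal{R}$ and two sets $\mathcal{S},\mathcal{T}$ of relations over $D$ each definable in $\mathcal{R}$ by a quantifier-free first-order formula (with equality, without parameters). A sidedoor triple $\llbracket\mathcal{S}',\mathcal{T}',r\rrbracket$ consists of two sets of relations $\mathcal{S}',\mathcal{T}'$ over a common domain with $\mathcal{T}'\subseteq\mathcal{S}'$ and an integer $r\ge1$. For distinct variables $x_1,\dots,x_r$, let $\mathcal{S}'_r$ (resp. $\mathcal{T}'_r$) be the set of $\mathrm{CSP}(\mathcal{S}')$ (resp. $\mathrm{CSP}(\mathcal{T}')$) instances with variable set $\{x_1,\dots,x_r\}$. A branching map for $\llbracket\mathcal{S}',\mathcal{T}',r\rrbracket$ (from $\mathcal{S}'$ to $\mathcal{T}'$ with radius $r$) is a total map $\Omega\colon\mathcal{S}'_r\to2^{\mathcal{T}'_r}$ with $\mathrm{Sol}(I)=\bigcup_{I'\in\Omega(I)}\mathrm{Sol}(I')$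 for every $I\in\mathcal{S}'_r$, where $\mathrm{Sol}$ denotes the set of satisfying assignments. *)

From mathcomp Require Import all_boot.
From Stdlib Require List.
Set Implicit Arguments. Unset Strict Implicit. Unset Printing Implicit Defensive.

Definition relation (D : Type) : Type := {k : nat & ('I_k -> D) -> Prop}.

Definition arity (D : Type) (rho : relation D) : nat := projT1 rho.

Definition binrel (D : Type) (rho : D -> D -> Prop) : relation D :=
  existT (fun k => ('I_k -> D) -> Prop) 2
    (fun t => rho (t (@Ordinal 2 0 isT)) (t (@Ordinal 2 1 isT))).

Definition partition_scheme (D : Type) (R : seq (D -> D -> Prop)) : Prop :=
  [/\ (forall rho sigma, List.In rho R -> List.In sigma R -> rho <> sigma ->
         forall x y, ~ (rho x y /\ sigma x y)),
      (forall x y, exists2 rho, List.In rho R & rho x y),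
      List.In (fun x y : D => x = y) R
    & (forall rho, List.In rho R -> List.In (fun x y => rho y x) R)].

(* Quantifier-free first-order formulas with equality in k free variables,
   whose atoms are binary relations (required to belong to R, see below). *)
Inductive qf (D : Type) (k : nat) : Type :=
| QTrue
| QEq of 'I_k & 'I_k
| QAtom of (D -> D -> Prop) & 'I_k & 'I_k
| QNot of qf D k
| QAnd of qf D k & qf D k
| QOr of qf D k & qf D k.

Fixpoint qf_atoms_in (D : Type) (k : nat) (R : seq (D -> D -> Prop))
    (phi : qf D k) : Prop :=
  match phi with
  | QTrue => True
  | QEq _ _ => True
  | QAtom rho _ _ => List.In rho R
  | QNot p => qf_atoms_in R p
  | QAnd p q => qf_atoms_in R p /\ qf_atoms_in R q
  | QOr p q => qf_atoms_in R p /\ qf_atoms_in R q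
  end.

Fixpoint qf_eval (D : Type) (k : nat) (phi : qf D k) (t : 'I_k -> D) : Prop :=
  match phi with
  | QTrue => True
  | QEq i j => t i = t j
  | QAtom rho i j => rho (t i) (t j)
  | QNot p => ~ qf_eval p t
  | QAnd p q => qf_eval p t /\ qf_eval q t
  | QOr p q => qf_eval p t \/ qf_eval q t
  end.

Definition qf_definable (D : Type) (R : seq (D -> D -> Prop)) (rho : relation D)
  : Prop :=
  exists phi : qf D (arity rho),
    qf_atoms_in R phi /\ forall t, projT2 rho t <-> qf_eval phi t.

Definition backdoor_triple (D : Type) (S T : seq (relation D))
    (R : seq (D -> D -> Prop)) : Prop :=
  [/\ partition_scheme R,
      (forall s, List.In s S -> qf_definable R s)
    & (forall t, List.In t T -> qf_definable R t)].

Record constraint (D : Type) (r : nat) := Constraint {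
  c_rel : relation D;
  c_scope : 'I_(arity c_rel) -> 'I_r }.

Definition instance (D : Type) (r : nat) := seq (constraint D r).

Definition instance_of (D : Type) (r : nat) (Gamma : seq (relation D))
    (I : instance D r) : Prop :=
  forall c, List.In c I -> List.In (c_rel c) Gamma.

Definition Sol (D : Type) (r : nat) (I : instance D r) (f : 'I_r -> D) : Prop :=
  forall c, List.In c I -> projT2 (c_rel c) (fun i => f (@c_scope D r c i)).

Definition branching_map (D : Type) (S' T' : seq (relation D)) (r : nat)
    (Omega : instance D r -> (instance D r -> Prop)) : Prop :=
  forall I, instance_of S' I ->
    (forall I', Omega I I' -> instance_of T' I') /\
    (forall f, Sol I f <-> exists2 I', Omega I I' & Sol I' f).

From mathcomp Require Import all_boot.
From Stdlib Require List.
From Stdlib Require Import Classical.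
Set Implicit Arguments. Unset Strict Implicit. Unset Printing Implicit Defensive.

(* Since R is a partition scheme, an r-tuple f realizes exactly one relation
   of R on each pair of its coordinates.  The binary R-constraints recording
   these relations form an instance whose solutions are the tuples of the same
   R-type as f, and a relation quantifier-free definable in R cannot tell such
   tuples apart.  Hence, if f solves I, so does every solution of the type
   instance of f, and branching I into the type instances of its solutions
   covers exactly the solutions of I. *)

Lemma mem_In (T : eqType) (x : T) (s : seq T) : x \in s -> List.In x s.
Proof. by elim: s => //= y s IHs; rewrite inE => /orP[/eqP|/IHs]; [left|right]. Qed.

Section Refinements.
Variables (D : Type) (r : nat).

Definition refinements (Gamma : seq (relation D)) (I I' : instance D r) : Prop :=
  instance_of Gamma I' /\ forall g, Sol I' g -> Sol I g.

Lemma refinements_branching_map (S' T' : seq (relation D)) :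
  (forall I f, instance_of S' I -> Sol I f ->
     exists2 I', refinements T' I I' & Sol I' f) ->
  branching_map S' T' (refinements T').
Proof.
move=> cover I S'I; split=> [I' []//|f]; split; first exact: cover.
by case=> I' [_ I'I] /I'I.
Qed.

End Refinements.

Section PartitionTypes.
Variables (D : Type) (R : seq (D -> D -> Prop)).
Hypothesis partR : partition_scheme R.

Definition same_type (r : nat) (f g : 'I_r -> D) : Prop :=
  forall i j, exists2 rho, List.In rho R & rho (f i) (f j) /\ rho (g i) (g j).

Lemma same_type_sym r (f g : 'I_r -> D) : same_type f g -> same_type g f.
Proof. by move=> fg i j; case: (fg i j) => rho Rrho [? ?]; exists rho. Qed.

Lemma partition_scheme_unique rho sigma x y :
  List.In rho R -> List.In sigma R -> rho x y -> sigma x y -> rho = sigma.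
Proof.
case: partR => disjR _ _ _ Rrho Rsigma rho_xy sigma_xy.
by apply: NNPP => neq; exact: (disjR rho sigma Rrho Rsigma neq x y).
Qed.

Lemma same_type_atom r (f g : 'I_r -> D) (sigma : D -> D -> Prop) i j :
  same_type f g -> List.In sigma R -> sigma (f i) (f j) -> sigma (g i) (g j).
Proof.
move=> fg Rsigma sigma_f; case: (fg i j) => rho Rrho [rho_f rho_g].
by rewrite (partition_scheme_unique Rsigma Rrho sigma_f rho_f).
Qed.

Lemma qf_eval_same_type r k (f g : 'I_r -> D) (s : 'I_k -> 'I_r) (phi : qf D k) :
  same_type f g -> qf_atoms_in R phi ->
  qf_eval phi (fun i => f (s i)) <-> qf_eval phi (fun i => g (s i)).
Proof.
move=> fg; have gf := same_type_sym fg.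
have Req : List.In (fun x y : D => x = y) R by case: partR.
elim: phi => //= [a b _|sigma a b Rsigma|p IHp /IHp|p IHp q IHq [/IHp + /IHq]
  |p IHp q IHq [/IHp + /IHq]]; try tauto.
- by split; apply: (same_type_atom (sigma := fun x y : D => x = y)) Req.
- by split; apply: same_type_atom Rsigma.
Qed.

Lemma qf_definable_same_type r (f g : 'I_r -> D) (rel : relation D)
    (s : 'I_(arity rel) -> 'I_r) :
  qf_definable R rel -> same_type f g ->
  projT2 rel (fun i => f (s i)) -> projT2 rel (fun i => g (s i)).
Proof.
case=> phi [Rphi defphi] fg /defphi rel_f; apply/defphi.
exact/(qf_eval_same_type s fg Rphi).
Qed.

Lemma Sol_same_type r (I : instance D r) (f g : 'I_r -> D) :
  (forall c, List.In c I -> qf_definable R (c_rel c)) ->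
  same_type f g -> Sol I f -> Sol I g.
Proof.
move=> defI fg solf c Ic.
exact: (qf_definable_same_type (defI c Ic) fg (solf c Ic)).
Qed.

Lemma qf_definable_binrel rho : List.In rho R -> qf_definable R (binrel rho).
Proof. by exists (QAtom rho (@Ordinal 2 0 isT) (@Ordinal 2 1 isT)). Qed.

Lemma exists_R_type r (f : 'I_r -> D) :
  exists2 tp : 'I_r -> 'I_r -> D -> D -> Prop,
    forall i j, List.In (tp i j) R & forall i j, tp i j (f i) (f j).
Proof.
case: partR => _ coverR _ _.
have cover_pair i j : exists rho, List.In rho R /\ rho (f i) (f j).
  by case: (coverR (f i) (f j)) => rho; exists rho.
have /fin_all_exists [tp tpP] i := fin_all_exists (cover_pair i).
by exists tp => i j; case: (tpP i j).
Qed.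

Lemma R_type_same_type r (tp : 'I_r -> 'I_r -> D -> D -> Prop) (f g : 'I_r -> D) :
  (forall i j, List.In (tp i j) R) ->
  (forall i j, tp i j (f i) (f j)) -> (forall i j, tp i j (g i) (g j)) ->
  same_type f g.
Proof. by move=> tpR tp_f tp_g i j; exists (tp i j). Qed.

End PartitionTypes.

Section TypeInstance.
Variables (D : Type) (r : nat).

Definition pair_scope (i j : 'I_r) (k : 'I_2) : 'I_r := if val k == 0 then i else j.

Definition type_instance (tp : 'I_r -> 'I_r -> D -> D -> Prop) : instance D r :=
  [seq @Constraint D r (binrel (tp p.1 p.2)) (pair_scope p.1 p.2)
  | p <- enum {: 'I_r * 'I_r}].

Lemma type_instance_of (R : seq (D -> D -> Prop)) tp :
  (forall i j, List.In (tp i j) R) ->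
  instance_of (map (@binrel D) R) (type_instance tp).
Proof.
move=> tpR c /List.in_map_iff [[i j] [<- _]].
exact: (List.in_map (@binrel D) _ _ (tpR i j)).
Qed.

Lemma Sol_type_instance tp (g : 'I_r -> D) :
  Sol (type_instance tp) g <-> forall i j, tp i j (g i) (g j).
Proof.
split=> [solg i j | tp_g c /List.in_map_iff [[i j] [<- _]]]; last exact: tp_g.
apply: (solg (@Constraint D r (binrel (tp i j)) (pair_scope i j))).
by apply/List.in_map_iff; exists (i, j); split; last by apply: mem_In; rewrite mem_enum.
Qed.

End TypeInstance.

Theorem mainTheorem12 (D : Type) (S T : seq (relation D))
    (R : seq (D -> D -> Prop)) (r : nat) :
  backdoor_triple S T R ->
  (maxn 2 (\max_(s <- S) arity s) <= r)%N ->
  exists Omega : instance D r -> (instance D r -> Prop),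
    @branching_map D (S ++ map (@binrel D) R) (T ++ map (@binrel D) R) r Omega.
Proof.
case=> partR defS _ _; eexists; apply: refinements_branching_map => I f SRI solf.
have [tp tpR tp_f] := exists_R_type partR f.
have defI c : List.In c I -> qf_definable R (c_rel c).
  move=> Ic; case: (List.in_app_or _ _ _ (SRI c Ic)) => [/defS //|].
  by case/List.in_map_iff => rho [<- /qf_definable_binrel].
exists (type_instance tp); last exact/Sol_type_instance.
split=> [c /(type_instance_of tpR) TRc | g /Sol_type_instance tp_g].
  by apply: List.in_or_app; right.
exact: (Sol_same_type partR defI (R_type_same_type tpR tp_f tp_g) solf).
Qed.
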